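(* Let $\rho\in(0,1)$, $\alpha\ge0$, $k>2$ an integer, and define for $C\ge1$ the function $\hat\rho(C)=\tilde\rho(C)+3\alpha kC$. Let $C_0=\frac{2+\rho^k}{2-\rho^k}$. Then: (i) if $\alpha<\frac{\rho^k(1-\rho^k)}{3k(2+\rho^k)}=:\alpha_0$, there exists a nonempty interval $I$ containing $C_0$ such that $\hat\rho(C)<\rho^k$ for all $C\in I$; (ii) if $\alpha<\min\big(\frac{\rho^k(1-\rho^k)}{3k(2+\rho^k)},\frac{\rho^k-\rho_1}{3kC_1}\big)$, then $\hat\rho(C)<\rho^k$ for all $C\in[C_0,C_1]$; (iii) if $\alpha<\min\big(\frac{\rho^k(1-\rho^k)}{3k(2+\rho^k)},\frac{\rho^k-\rho_*}{3kC_*}\big)$, then $\hat\rho(C)<\rho^k$ for all $C\in[C_0,C_*]$.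
   Context: $\mathbb{R}_k[X]$ denotes real polynomials of degree at most $k$; $\|p\|_1$ is the sum of absolute values of coefficients of $p$. $\tilde\rho(C)=\min\{\max_{x\in[0,\rho]}|p(x)|:p\in\mathbb{R}_k[X],\ p(1)=1,\ \|p\|_1\le C\}$. (The quantity $\hat\rho(C)$ is the linear convergence factor guaranteed for one pass of Constrained Anderson Acceleration applied to a $\rho$-Lipschitz map $F=G+\xi$ with $0\preccurlyeq G\preccurlyeq\rho I$ symmetric and $\xi$ $\alpha$-Lipschitz.) $T_k$ is the first-kind Chebyshev polynomial of degree $k$; $C_*=\|p_*\|_1$ with $p_*(X)=T_k(\frac{2X-\rho}{\rho})/|T_k(\frac{2-\rho}{\rho})|$; $\rho_*=\frac{2\beta^k}{1+\beta^{2k}}$ with $\beta=\frac{1-\sqrt{1-\rho}}{1+\sqrt{1-\rho}}$; $\beta_\rho=\frac{\sqrt{1+\rho}-\sqrt{1-\rho}}{\sqrt{1+\rho}+\sqrt{1-\rho}}$, $\rho_1=\frac{2\beta_\rho^k}{1+\beta_\rho^{2k}}$, $C_1=\frac{\rho_1}{2\rho^k}\big((1-\sqrt{1+\rho^2})^k+(1+\sqrt{1+\rho^2})^k\big)$. *)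

From HB Require Import structures.
From mathcomp Require Import all_boot all_order all_algebra.
From mathcomp Require Import boolp classical_sets reals.
Set Implicit Arguments. Unset Strict Implicit. Unset Printing Implicit Defensive.
Import Order.TTheory GRing.Theory Num.Theory.
Local Open Scope classical_set_scope.
Local Open Scope ring_scope.

Section Defs.
Variable R : realType.

Definition l1norm (p : {poly R}) : R := \sum_(i < size p) `|p`_i|.

Definition supnorm_on (rho : R) (p : {poly R}) : R :=
  sup [set `|p.[x]| | x in [set x : R | 0 <= x <= rho]].

Definition rho_tilde (rho : R) (k : nat) (C : R) : R :=
  inf [set supnorm_on rho p | p in
        [set p : {poly R} | (size p <= k.+1)%N /\ p.[1] = 1 /\ l1norm p <= C]].

Definition rho_hat (rho alpha : R) (k : nat) (C : R) : R :=
  rho_tilde rho k C + 3 * alpha * k%:R * C.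

Fixpoint cheb (n : nat) : {poly R} :=
  match n with
  | 0 => 1
  | 1 => 'X
  | (m.+1 as n').+1 => 2%:P * 'X * cheb n' - cheb m
  end.

Definition p_star (rho : R) (k : nat) : {poly R} :=
  (`|(cheb k).[(2 - rho) / rho]|)^-1 *: (cheb k \Po ((2 / rho) *: 'X - 1)).

Definition C_star (rho : R) (k : nat) : R := l1norm (p_star rho k).

Definition beta (rho : R) : R :=
  (1 - Num.sqrt (1 - rho)) / (1 + Num.sqrt (1 - rho)).

Definition rho_star (rho : R) (k : nat) : R :=
  2 * beta rho ^+ k / (1 + beta rho ^+ (2 * k)).

Definition beta_rho (rho : R) : R :=
  (Num.sqrt (1 + rho) - Num.sqrt (1 - rho)) / (Num.sqrt (1 + rho) + Num.sqrt (1 - rho)).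

Definition rho_1 (rho : R) (k : nat) : R :=
  2 * beta_rho rho ^+ k / (1 + beta_rho rho ^+ (2 * k)).

Definition C_1 (rho : R) (k : nat) : R :=
  rho_1 rho k / (2 * rho ^+ k) *
  ((1 - Num.sqrt (1 + rho ^+ 2)) ^+ k + (1 + Num.sqrt (1 + rho ^+ 2)) ^+ k).

Definition C_0 (rho : R) (k : nat) : R := (2 + rho ^+ k) / (2 - rho ^+ k).

Definition alpha_0 (rho : R) (k : nat) : R :=
  rho ^+ k * (1 - rho ^+ k) / (3 * k%:R * (2 + rho ^+ k)).

End Defs.

(* Averaging two admissible polynomials p0, p1 with weights t, 1 - t gives an
   admissible polynomial whose l1-norm and sup-norm on [0, rho] are at most the
   same averages, so rho_hat lies below the chord joining any two points
   (c, m + 3 alpha k c) certified by explicit polynomials.  It then suffices to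
   certify a value below rho^k at the endpoints.  At C_0 the certificate is
   (X^k - rho^k/2) / (1 - rho^k/2), with sup-norm rho^k / (2 - rho^k); this is
   below rho^k exactly when alpha < alpha_0.  At C_1 and C_* one uses
   T_k(X/rho) / T_k(1/rho) and p_*: |T_k| <= 1 on [-1, 1] and
   T_k((b + 1/b)/2) = (b^k + b^-k)/2 give the sup-norms rho_1 and rho_*, and the
   l1-norm of T_k(X/rho) is the signless Chebyshev polynomial at 1/rho. *)

From HB Require Import structures.
From mathcomp Require Import all_boot all_order all_algebra.
From mathcomp Require Import boolp classical_sets reals.
From mathcomp Require Import ring lra zify.

Set Implicit Arguments.
Unset Strict Implicit.
Unset Printing Implicit Defensive.

Import Order.TTheory GRing.Theory Num.Theory.
Local Open Scope ring_scope.

Lemma nat_ind2 (P : nat -> Prop) :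
  P 0%N -> P 1%N -> (forall n, P n -> P n.+1 -> P n.+2) -> forall n, P n.
Proof.
move=> P0 P1 PSS n; suff [] : P n /\ P n.+1 by [].
by elim: n => [|n [Pn PSn]]; split => //; apply: PSS.
Qed.

Lemma segment_convex_comb (R : realFieldType) (a b x : R) :
  a <= x <= b -> exists2 t, 0 <= t <= 1 & x = t * a + (1 - t) * b.
Proof.
move=> /andP[ax xb]; have [ab|] := eqVneq a b.
  by exists 1; [rewrite ler01 lexx | apply/le_anti; rewrite -ab in xb; lra].
rewrite neq_lt => /orP[ab|ba]; last by have := le_trans ax xb; lra.
exists ((b - x) / (b - a)); last by field; lra.
by rewrite divr_ge0 ?ler_pdivrMr ?mul1r; lra.
Qed.

Lemma convex_comb_lt (R : realFieldType) (t a b e : R) :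
  0 <= t <= 1 -> a < e -> b < e -> t * a + (1 - t) * b < e.
Proof. by move=> /andP[t0 t1] ae be; have [ab|ba] := leP a b; nra. Qed.

Section L1norm.
Variable R : realType.
Implicit Types (p q : {poly R}) (a : R).

Lemma l1normE p n : (size p <= n)%N -> l1norm p = \sum_(i < n) `|p`_i|.
Proof.
move=> sp; rewrite /l1norm -!(big_mkord xpredT (fun i => `|p`_i|)).
rewrite (big_cat_nat (leq0n (size p)) sp) /= [X in _ + X]big1_seq ?addr0 //.
move=> i /andP[_]; rewrite mem_index_iota => /andP[hi _].
by rewrite nth_default // normr0.
Qed.

Lemma l1norm_ge0 p : 0 <= l1norm p.
Proof. by rewrite sumr_ge0. Qed.

Lemma l1normZ a p : l1norm (a *: p) = `|a| * l1norm p.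
Proof.
rewrite (l1normE (size_scale_leq a p)) /l1norm mulr_sumr.
by apply: eq_bigr => i _; rewrite coefZ normrM.
Qed.

Lemma l1normD_le p q : l1norm (p + q) <= l1norm p + l1norm q.
Proof.
rewrite (l1normE (size_polyD p q)) (l1normE (leq_maxl (size p) (size q))).
rewrite (l1normE (leq_maxr (size p) (size q))) -big_split /=.
by apply: ler_sum => i _; rewrite coefD ler_normD.
Qed.

Lemma l1norm_XnsubC n a : l1norm ('X^(n.+1) - a%:P) = 1 + `|a|.
Proof.
rewrite /l1norm size_XnsubC // big_ord_recr big_ord_recl /= big1 => [|i _].
  by rewrite !coefB !coefXn !coefC /= eqxx subr0 sub0r normrN normr1 addr0 addrC.
rewrite coefB coefXn coefC /= eqSS (ltn_eqF (ltn_ord i)).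
by rewrite subr0 normr0.
Qed.

End L1norm.

Section RhoTilde.
Local Open Scope classical_set_scope.
Variables (R : realType) (rho : R) (k : nat).
Hypothesis rho_ge0 : 0 <= rho.

Lemma supnorm_on_ge0 p : 0 <= supnorm_on rho p.
Proof.
rewrite /supnorm_on; set S := [set _ | _ in _].
have [hS|] := pselect (has_sup S); last by move/sup_out ->.
apply: le_trans (normr_ge0 p.[0]) (ub_le_sup hS.2 _).
by exists 0 => //=; rewrite lexx rho_ge0.
Qed.

Lemma supnorm_on_le p (m : R) :
  (forall x, 0 <= x <= rho -> `|p.[x]| <= m) -> supnorm_on rho p <= m.
Proof.
move=> pm; apply: ge_sup; first by exists `|p.[0]|, 0; rewrite //= lexx.
by move=> _ [x /= x0r <-]; apply: pm.
Qed.

Definition rho_tilde_witness (C m : R) (p : {poly R}) :=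
  [/\ (size p <= k.+1)%N, p.[1] = 1, l1norm p <= C &
      forall x, 0 <= x <= rho -> `|p.[x]| <= m].

Lemma rho_tilde_le_witness (C m : R) p :
  rho_tilde_witness C m p -> rho_tilde rho k C <= m.
Proof.
case=> sp p1 lp pm; apply: le_trans (supnorm_on_le pm).
apply: ge_inf; last by exists p.
by exists 0 => _ [q _ <-]; apply: supnorm_on_ge0.
Qed.

Lemma rho_tilde_witness_convex (t c0 c1 m0 m1 : R) p0 p1 :
  0 <= t <= 1 -> rho_tilde_witness c0 m0 p0 -> rho_tilde_witness c1 m1 p1 ->
  rho_tilde_witness (t * c0 + (1 - t) * c1) (t * m0 + (1 - t) * m1)
                    (t *: p0 + (1 - t) *: p1).
Proof.
move=> /andP[t0 t1] [s0 e0 l0 b0] [s1 e1 l1 b1].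
have t0' : 0 <= 1 - t by rewrite subr_ge0.
split.
- apply: leq_trans (size_polyD _ _) _; rewrite geq_max.
  by rewrite !(leq_trans (size_scale_leq _ _)).
- by rewrite !hornerE e0 e1; ring.
- apply: le_trans (l1normD_le _ _) _; rewrite !l1normZ !ger0_norm //.
  by rewrite lerD // ler_wpM2l.
- move=> x x0r; rewrite !hornerE; apply: le_trans (ler_normD _ _) _.
  rewrite !normrM (ger0_norm t0) (ger0_norm t0').
  by rewrite lerD // ler_wpM2l // (b0, b1).
Qed.

Lemma rho_hat_lt_segment (alpha e c0 c1 m0 m1 C : R) p0 p1 :
  rho_tilde_witness c0 m0 p0 -> rho_tilde_witness c1 m1 p1 ->
  m0 + 3 * alpha * k%:R * c0 < e -> m1 + 3 * alpha * k%:R * c1 < e ->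
  c0 <= C <= c1 -> rho_hat rho alpha k C < e.
Proof.
move=> w0 w1 h0 h1 /segment_convex_comb[t t01 ->].
have := rho_tilde_le_witness (rho_tilde_witness_convex t01 w0 w1).
have := convex_comb_lt t01 h0 h1.
rewrite /rho_hat; lra.
Qed.

Lemma rho_hat_lt_right (alpha e c m : R) p :
  0 <= alpha -> rho_tilde_witness c m p -> m + 3 * alpha * k%:R * c < e ->
  exists2 d, 0 < d & forall C, c <= C <= c + d -> rho_hat rho alpha k C < e.
Proof.
move=> alpha0 w h; set K := 3 * alpha * k%:R in h.
have K0 : 0 <= K by rewrite !mulr_ge0.
pose d := (e - (m + K * c)) / (K + 1).
have d0 : 0 < d by rewrite divr_gt0; lra.
have Kd : K * d = e - (m + K * c) - d by rewrite /d; field; lra.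
have w' : rho_tilde_witness (c + d) m p by case: w => s e1 l b; split => //; lra.
by exists d => // C; apply: rho_hat_lt_segment w w' h _; rewrite -/K; lra.
Qed.

End RhoTilde.

Lemma coef_comp_polyZX (R : comNzRingType) (p : {poly R}) (c : R) i :
  (p \Po (c *: 'X))`_i = c ^+ i * p`_i.
Proof.
rewrite comp_polyE; under eq_bigr do rewrite exprZn scalerA.
rewrite coef_sumMXn (big_ord1_cond_eq _ (fun j => p`_j * c ^+ j) xpredT).
rewrite andbT mulrC.
by case: ltnP => // /(nth_default 0) ->; rewrite mulr0.
Qed.

Section Dickson.
Variable R : realType.
Implicit Types (a b t u y : R) (q : {poly R}).

(* Half the Dickson polynomial D_n(2X, a). *)
Fixpoint dickson a n : {poly R} :=
  match n with
  | 0 => 1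
  | 1 => 'X
  | (m.+1 as n').+1 => 2%:P * 'X * dickson a n' - a *: dickson a m
  end.

Lemma dicksonSS a n :
  dickson a n.+2 = 2%:P * 'X * dickson a n.+1 - a *: dickson a n.
Proof. by []. Qed.

Lemma cheb_dickson n : cheb R n = dickson 1 n.
Proof.
by elim/nat_ind2: n => [||n IH0 IH1] //; rewrite dicksonSS -IH0 -IH1 scale1r.
Qed.

Lemma size_dickson a n : (size (dickson a n) <= n.+1)%N.
Proof.
elim/nat_ind2: n => [||n IH0 IH1]; first by rewrite size_poly1.
  by rewrite size_polyX.
rewrite dicksonSS; apply: leq_trans (size_polyD _ _) _; rewrite geq_max.
rewrite size_polyN; apply/andP; split.
  rewrite -mulrA mul_polyC (leq_trans (size_scale_leq _ _)) //.
  by rewrite (leq_trans (size_polyMleq _ _)) // size_polyX.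
by apply: leq_trans (size_scale_leq _ _) (leq_trans IH0 _); lia.
Qed.

Lemma horner_dickson a t u n : t * u = a ->
  (dickson a n).[(t + u) / 2] = (t ^+ n + u ^+ n) / 2.
Proof.
move=> tua; elim/nat_ind2: n => [||n IH0 IH1].
- by rewrite hornerC !expr0; field.
- by rewrite hornerX !expr1.
rewrite dicksonSS hornerD hornerN hornerZ !hornerM hornerC hornerX IH0 IH1.
by rewrite -tua !exprS; field.
Qed.

Lemma coef_2X_mul q j :
  (2%:P * 'X * q)`_j = if j is j'.+1 then 2 * q`_j' else 0.
Proof. by rewrite -mulrA coefCM coefXM; case: j => [|j] /=; rewrite ?mulr0. Qed.

Lemma coef_dickson_ge0 a n j : a <= 0 -> 0 <= (dickson a n)`_j.
Proof.
move=> a0; elim/nat_ind2: n j => [||n IH0 IH1] j.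
- by rewrite coef1; case: (j == 0)%N.
- by rewrite coefX; case: (j == 1)%N.
rewrite dicksonSS coefB coefZ coef_2X_mul; case: j => [|j].
  by rewrite sub0r -mulNr mulr_ge0 ?oppr_ge0.
by rewrite -mulNr addr_ge0 ?mulr_ge0 ?oppr_ge0.
Qed.

Lemma size_cheb_comp n q :
  (size q <= 2)%N -> (size (cheb R n \Po q) <= n.+1)%N.
Proof.
move=> sq; apply: leq_trans (size_comp_poly_leq _ _) _; rewrite ltnS.
have sc : ((size (cheb R n)).-1 <= n)%N.
  by have := size_dickson 1 n; rewrite -cheb_dickson; lia.
have sq1 : ((size q).-1 <= 1)%N by lia.
by have := leq_mul sc sq1; rewrite muln1.
Qed.

(* The sign is (-1)^((n - j)/2) when n - j is even; otherwise both
   coefficients vanish.  Writing n + 3j avoids truncated subtraction. *)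
Lemma coef_cheb n j :
  (cheb R n)`_j = (-1) ^+ (n + 3 * j)./2 * (dickson (-1) n)`_j.
Proof.
rewrite cheb_dickson; elim/nat_ind2: n j => [||n IH0 IH1] [|j].
- by rewrite coef1 mul1r.
- by rewrite !coef1 mulr0.
- by rewrite coefX mulr0.
- by rewrite !coefX; case: j => [|j] /=; rewrite ?mulr0 // sqrrN expr1n mul1r.
- rewrite !dicksonSS !coefB !coefZ !coef_2X_mul IH0 !muln0 !addn0 /=.
  by rewrite exprS; ring.
rewrite !dicksonSS !coefB !coefZ !coef_2X_mul IH0 IH1.
have -> : (n.+1 + 3 * j = (n + 3 * j).+1)%N by lia.
have -> : (n + 3 * j.+1 = (n + 3 * j).+1.+2)%N by lia.
have -> : (n.+2 + 3 * j.+1 = (n + 3 * j).+1.+4)%N by lia.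
by rewrite /= !exprS; ring.
Qed.

Lemma l1norm_cheb_comp c n : 0 <= c ->
  l1norm (cheb R n \Po (c *: 'X)) = (dickson (-1) n).[c].
Proof.
move=> c0; have sX : (size (c *: 'X : {poly R}) <= 2)%N.
  by rewrite (leq_trans (size_scale_leq _ _)) // size_polyX.
rewrite (l1normE (size_cheb_comp n sX)) (horner_coef_wide _ (size_dickson _ _)).
apply: eq_bigr => i _; rewrite coef_comp_polyZX coef_cheb !normrM !normrX.
by rewrite normrN1 expr1n mul1r !ger0_norm ?coef_dickson_ge0 ?lerN10 // mulrC.
Qed.

Lemma cheb_sqr_invariant y n :
  (cheb R n.+1).[y] ^+ 2 - 2 * y * (cheb R n.+1).[y] * (cheb R n).[y]
    + (cheb R n).[y] ^+ 2 = 1 - y ^+ 2.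
Proof.
elim: n => [|n IH]; first by rewrite /= hornerX hornerC; ring.
by rewrite -IH /= !(hornerD, hornerN, hornerM, hornerC, hornerX); ring.
Qed.

Lemma cheb_le1 y n : -1 <= y <= 1 -> `|(cheb R n).[y]| <= 1.
Proof.
move=> y1; have [y2|y2] := eqVneq (y ^+ 2) 1.
  (* At y = +-1 the invariant below carries no information, but T_n(y) = y^n. *)
  have -> : y = (y + y) / 2 by field.
  rewrite cheb_dickson horner_dickson ?(expr2 y) //.
  rewrite (_ : _ / 2 = y ^+ n); last by field.
  by rewrite normrX (_ : `|y| = 1) ?expr1n // -[`|y|]sqrtr_sqr y2 sqrtr1.
have {}y2 : y ^+ 2 < 1 by rewrite lt_neqAle y2 /= expr2; nra.
have := cheb_sqr_invariant y n.
set u := (cheb R n.+1).[y]; set v := (cheb R n).[y] => uv.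
have uvE : (1 - y ^+ 2) * (1 - v ^+ 2) = (u - y * v) ^+ 2.
  by rewrite mulrBr mulr1 -{1}uv; ring.
have : 0 <= (1 - y ^+ 2) * (1 - v ^+ 2) by rewrite uvE sqr_ge0.
rewrite pmulr_rge0 ?subr_gt0 // subr_ge0 => v2.
by rewrite ler_norml; apply/andP; split; nra.
Qed.

Lemma cheb_half_add_inv b n : b != 0 ->
  (cheb R n).[(b + b^-1) / 2] = (b ^+ n + b^-1 ^+ n) / 2.
Proof. by move=> b0; rewrite cheb_dickson horner_dickson // mulfV. Qed.

Lemma cheb_half_add_inv_gt0 b n : 0 < b -> 0 < (cheb R n).[(b + b^-1) / 2].
Proof.
move=> b0; rewrite cheb_half_add_inv ?gt_eqF //.
by rewrite divr_gt0 // addr_gt0 // exprn_gt0 // invr_gt0.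
Qed.

Lemma invr_cheb_half_add_inv b n : 0 < b ->
  ((cheb R n).[(b + b^-1) / 2])^-1 = 2 * b ^+ n / (1 + b ^+ (2 * n)).
Proof.
move=> b0; have bn : 0 < b ^+ n by rewrite exprn_gt0.
rewrite cheb_half_add_inv ?gt_eqF // mulnC exprM exprVn; field.
by rewrite (gt_eqF bn) gt_eqF //; nra.
Qed.

End Dickson.

Lemma ratio_gt0 (R : realFieldType) (a b : R) :
  0 <= b < a -> 0 < (a - b) / (a + b).
Proof. by case/andP=> b0 ba; rewrite divr_gt0 //; lra. Qed.

Lemma half_add_inv_ratio (R : realFieldType) (a b : R) : 0 <= b < a ->
  ((a - b) / (a + b) + ((a - b) / (a + b))^-1) / 2
  = (a ^+ 2 + b ^+ 2) / (a ^+ 2 - b ^+ 2).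
Proof.
case/andP=> b0 ba; rewrite invf_div; field.
rewrite (_ : _ - _ = (a + b) * (a - b)); last by ring.
by rewrite !mulf_neq0 ?gt_eqF //; lra.
Qed.

(* For d = 0 the hypothesis reads a < 0, since x / 0 = 0. *)
Lemma lt_divr_mul (R : realFieldType) (a d x : R) :
  0 <= a -> 0 <= d -> a < x / d -> a * d < x.
Proof.
move=> a0; rewrite le_eqVlt => /predU1P[<-|d0].
  by rewrite invr0 mulr0; lra.
by rewrite ltr_pdivlMr.
Qed.

Section Witnesses.
Variables (R : realType) (rho : R) (k : nat).
Hypotheses (rho_gt0 : 0 < rho) (rho_lt1 : rho < 1).

Definition p_0 : {poly R} :=
  (1 - rho ^+ k / 2)^-1 *: ('X^k - (rho ^+ k / 2)%:P).

Lemma p_0_witness : (0 < k)%N ->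
  rho_tilde_witness rho k (C_0 rho k) (rho ^+ k / (2 - rho ^+ k)) p_0.
Proof.
move=> k0; have rk0 : 0 < rho ^+ k by rewrite exprn_gt0.
have rk1 : rho ^+ k < 1 by rewrite exprn_ilt1 ?ltW // -lt0n.
rewrite /p_0 /C_0; set r := rho ^+ k in rk0 rk1 *.
have c0 : 0 < 1 - r / 2 by lra.
split.
- by rewrite (leq_trans (size_scale_leq _ _)) // size_XnsubC.
- by rewrite !hornerE expr1n mulVf ?gt_eqF.
- rewrite l1normZ -[in 'X^k](prednK k0) l1norm_XnsubC.
  rewrite gtr0_norm ?invr_gt0 // ger0_norm; last lra.
  by rewrite le_eqVlt; apply/orP; left; apply/eqP; field; lra.
- move=> x /andP[x0 xr].
  have xk : x ^+ k <= r by apply: lerXn2r; rewrite ?nnegrE // ltW.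
  have xk0 : 0 <= x ^+ k by rewrite exprn_ge0.
  have c0' : 0 <= (1 - r / 2)^-1 by rewrite invr_ge0 ltW.
  rewrite !hornerE normrM ger0_norm //.
  have -> : r / (2 - r) = (1 - r / 2)^-1 * (r / 2) by field; lra.
  by apply: ler_wpM2l; rewrite // ler_norml; lra.
Qed.

Lemma p_0_margin (alpha : R) :
  0 <= alpha -> (0 < k)%N -> alpha < alpha_0 rho k ->
  rho ^+ k / (2 - rho ^+ k) + 3 * alpha * k%:R * C_0 rho k < rho ^+ k.
Proof.
move=> alpha0 k0; have rk0 : 0 < rho ^+ k by rewrite exprn_gt0.
have rk1 : rho ^+ k < 1 by rewrite exprn_ilt1 ?ltW // -lt0n.
have kp : 0 < k%:R :> R by rewrite ltr0n.
rewrite /alpha_0 /C_0; set r := rho ^+ k in rk0 rk1 *.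
rewrite ltr_pdivlMr ?mulr_gt0 //; last lra.
set K := 3 * alpha * k%:R => hK.
have -> : r / (2 - r) + K * ((2 + r) / (2 - r)) = (r + K * (2 + r)) / (2 - r).
  by field; lra.
rewrite ltr_pdivrMr; last lra.
rewrite /K; nra.
Qed.

Definition cheb_normalized (q : {poly R}) : {poly R} :=
  (`|(cheb R k).[q.[1]]|)^-1 *: (cheb R k \Po q).

Lemma cheb_normalized_witness (q : {poly R}) (b : R) :
  (size q <= 2)%N -> (forall x, 0 <= x <= rho -> -1 <= q.[x] <= 1) ->
  0 < b -> q.[1] = (b + b^-1) / 2 ->
  rho_tilde_witness rho k (l1norm (cheb_normalized q))
    (2 * b ^+ k / (1 + b ^+ (2 * k))) (cheb_normalized q).
Proof.
move=> sq qrange b0 q1; rewrite -(invr_cheb_half_add_inv k b0) -q1.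
have T0 : 0 < (cheb R k).[q.[1]] by rewrite q1 cheb_half_add_inv_gt0.
rewrite /cheb_normalized gtr0_norm //; split => //.
- by rewrite (leq_trans (size_scale_leq _ _)) // size_cheb_comp.
- by rewrite hornerZ horner_comp mulVf ?gt_eqF.
- move=> x x0r; rewrite hornerZ horner_comp normrM gtr0_norm ?invr_gt0 //.
  rewrite -[X in _ <= X]mulr1; apply: ler_wpM2l; first by rewrite invr_ge0 ltW.
  exact/cheb_le1/qrange.
Qed.

Lemma sqrt_1Br_lt1 : Num.sqrt (1 - rho) < 1.
Proof. by rewrite -[X in _ < X](@sqrtr1 R) ltr_sqrt // gtrBl. Qed.

Lemma sqrt_1Br_lt_sqrt_1Dr : Num.sqrt (1 - rho) < Num.sqrt (1 + rho).
Proof. by rewrite ltr_sqrt ?ltrD2l ?gtrN // addr_gt0. Qed.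

Lemma beta_gt0 : 0 < beta rho.
Proof. by apply: ratio_gt0; rewrite sqrtr_ge0 sqrt_1Br_lt1. Qed.

Lemma half_add_inv_beta : (beta rho + (beta rho)^-1) / 2 = (2 - rho) / rho.
Proof.
rewrite half_add_inv_ratio ?sqrtr_ge0 ?sqrt_1Br_lt1 //.
rewrite sqr_sqrtr ?subr_ge0 ?ltW //.
by rewrite expr1n; field; rewrite gt_eqF.
Qed.

Lemma beta_rho_gt0 : 0 < beta_rho rho.
Proof. by apply: ratio_gt0; rewrite sqrtr_ge0 sqrt_1Br_lt_sqrt_1Dr. Qed.

Lemma half_add_inv_beta_rho : (beta_rho rho + (beta_rho rho)^-1) / 2 = rho^-1.
Proof.
rewrite half_add_inv_ratio ?sqrtr_ge0 ?sqrt_1Br_lt_sqrt_1Dr //.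
rewrite !sqr_sqrtr ?subr_ge0 ?addr_ge0 ?ltW //.
have -> : 1 + rho - (1 - rho) = 2 * rho by ring.
by field; rewrite gt_eqF.
Qed.

Definition p_1 : {poly R} := cheb_normalized (rho^-1 *: 'X).

Lemma l1norm_p_1 : l1norm p_1 = C_1 rho k.
Proof.
have T1 : `|(cheb R k).[rho^-1]|^-1 = rho_1 rho k.
  rewrite -half_add_inv_beta_rho.
  rewrite gtr0_norm ?cheb_half_add_inv_gt0 ?beta_rho_gt0 //.
  by rewrite invr_cheb_half_add_inv ?beta_rho_gt0.
rewrite /p_1 /cheb_normalized l1normZ ger0_norm ?invr_ge0 //.
rewrite hornerZ hornerX mulr1 T1 l1norm_cheb_comp ?invr_ge0 ?ltW // /C_1.
set s := Num.sqrt (1 + rho ^+ 2).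
have s2 : s ^+ 2 = 1 + rho ^+ 2 by rewrite sqr_sqrtr // addr_ge0 ?sqr_ge0.
have su : (1 + s) / rho * ((1 - s) / rho) = -1.
  rewrite mulf_div (_ : (1 + s) * (1 - s) = 1 - s ^+ 2); last by ring.
  by rewrite s2 -expr2; field; rewrite gt_eqF.
have -> : rho^-1 = ((1 + s) / rho + (1 - s) / rho) / 2 by field; rewrite gt_eqF.
rewrite horner_dickson //.
by rewrite !expr_div_n; field; rewrite gt_eqF ?exprn_gt0.
Qed.

Lemma p_1_witness : rho_tilde_witness rho k (C_1 rho k) (rho_1 rho k) p_1.
Proof.
rewrite -l1norm_p_1 /rho_1; apply: cheb_normalized_witness beta_rho_gt0 _.
- by rewrite (leq_trans (size_scale_leq _ _)) // size_polyX.
- move=> x /andP[x0 xr]; rewrite hornerZ hornerX mulrC.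
  have : x / rho <= 1 by rewrite ler_pdivrMr // mul1r.
  have : 0 <= x / rho by rewrite divr_ge0 // ltW.
  lra.
- by rewrite hornerZ hornerX mulr1 half_add_inv_beta_rho.
Qed.

Lemma p_star_cheb_normalized :
  p_star rho k = cheb_normalized ((2 / rho) *: 'X - 1).
Proof.
rewrite /p_star /cheb_normalized hornerD hornerN hornerZ hornerX hornerC mulr1.
by congr (`|(cheb R k).[_]|^-1 *: _); field; rewrite gt_eqF.
Qed.

Lemma p_star_witness :
  rho_tilde_witness rho k (C_star rho k) (rho_star rho k) (p_star rho k).
Proof.
rewrite /C_star p_star_cheb_normalized /rho_star.
apply: cheb_normalized_witness beta_gt0 _.
- apply: leq_trans (size_polyD _ _) _; rewrite geq_max size_polyN size_poly1.
  by rewrite (leq_trans (size_scale_leq _ _)) // size_polyX.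
- move=> x /andP[x0 xr]; rewrite hornerD hornerN hornerZ hornerX hornerC.
  have : x / rho <= 1 by rewrite ler_pdivrMr // mul1r.
  have : 0 <= x / rho by rewrite divr_ge0 // ltW.
  rewrite mulrAC; lra.
- rewrite hornerD hornerN hornerZ hornerX hornerC mulr1 half_add_inv_beta.
  by field; rewrite gt_eqF.
Qed.

End Witnesses.

Theorem proposition7 (R : realType) (rho alpha : R) (k : nat) :
  0 < rho < 1 -> 0 <= alpha -> (2 < k)%N ->
  [/\
   (* (i) *)
   alpha < alpha_0 rho k ->
     exists a b : R, [/\ 1 <= a, a < b, a <= C_0 rho k <= b &
       forall C, a <= C <= b -> rho_hat rho alpha k C < rho ^+ k],
   (* (ii) *)
   alpha < Num.min (alpha_0 rho k) ((rho ^+ k - rho_1 rho k) / (3 * k%:R * C_1 rho k)) ->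
     forall C, C_0 rho k <= C <= C_1 rho k -> rho_hat rho alpha k C < rho ^+ k
  &
   (* (iii) *)
   alpha < Num.min (alpha_0 rho k) ((rho ^+ k - rho_star rho k) / (3 * k%:R * C_star rho k)) ->
     forall C, C_0 rho k <= C <= C_star rho k -> rho_hat rho alpha k C < rho ^+ k].
Proof.
move=> /andP[rho_gt0 rho_lt1] alpha0 k_gt2; have k0 : (0 < k)%N by lia.
have rho0 := ltW rho_gt0.
have w0 := p_0_witness rho_gt0 rho_lt1 k0.
have margin (m c : R) : 0 <= c -> alpha < (rho ^+ k - m) / (3 * k%:R * c) ->
    m + 3 * alpha * k%:R * c < rho ^+ k.
  move=> c0; have k3c : 0 <= 3 * k%:R * c by rewrite !mulr_ge0.
  by move/(lt_divr_mul alpha0 k3c); lra.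
split.
- move/(p_0_margin rho_gt0 rho_lt1 alpha0 k0).
  case/(rho_hat_lt_right rho0 alpha0 w0) => d d0 near.
  exists (C_0 rho k), (C_0 rho k + d); split => //.
  + have rk0 : 0 <= rho ^+ k by rewrite exprn_ge0.
    have rk1 : rho ^+ k < 1 by rewrite exprn_ilt1 // -lt0n.
    by rewrite /C_0 ler_pdivlMr ?mul1r; lra.
  + by rewrite ltrDl.
  + by rewrite lexx lerDl ltW.
- rewrite lt_min => /andP[/(p_0_margin rho_gt0 rho_lt1 alpha0 k0) m0 m1] C.
  have c1 : 0 <= C_1 rho k by rewrite -(l1norm_p_1 k rho_gt0 rho_lt1) l1norm_ge0.
  have w1 := p_1_witness k rho_gt0 rho_lt1.
  exact: (rho_hat_lt_segment rho0 w0 w1 m0 (margin _ _ c1 m1)).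
- rewrite lt_min => /andP[/(p_0_margin rho_gt0 rho_lt1 alpha0 k0) m0 m1] C.
  have c1 : 0 <= C_star rho k := l1norm_ge0 _.
  have w1 := p_star_witness k rho_gt0 rho_lt1.
  exact: (rho_hat_lt_segment rho0 w0 w1 m0 (margin _ _ c1 m1)).
Qed.
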